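(* Fix $1\le r\le n$. Let $A\in ARI$ be a polynomial-valued mould concentrated in depth $r$, with $A^r$ homogeneous of degree $n-r$, such that $A$ is alternal, push-invariant, and $swap(A)$ is circ-neutral. Let $B=swap(A)$ and assume that $B(v_1,\dots,v_r)=(-1)^{r-1}B(v_r,\dots,v_1)$. Then if $n-r$ is odd, $A=0$.
   Context: $ARI$ is the space of moulds $A=(A^r)_{r\ge0}$ with $A^r\in\mathbb{Q}(u_1,\dots,u_r)$, $A^0=0$. $swap(A)(v_1,\dots,v_r)=A(v_r,v_{r-1}-v_r,\dots,v_1-v_2)$. $A$ is alternal if for every $r\ge2$ and $1\le i\le[r/2]$ the sum of $A^r$ over all shuffles of $(u_1,\dots,u_i)$ with $(u_{i+1},\dots,u_r)$ vanishes. $A$ is push-invariant if $A(u_0,u_1,\dots,u_{r-1})=A(u_1,\dots,u_r)$ with $u_0=-u_1-\dots-u_r$. A mould $B$ in variables $v_i$ is circ-neutral if $\sum_{i=0}^{r-1}B(v_{i+1},\dots,v_r,v_1,\dots,v_i)=0$ for $r>1$. *)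

From mathcomp Require Import all_boot all_order all_algebra all_fingroup.
From mathcomp Require Import mpoly.
Set Implicit Arguments. Unset Strict Implicit. Unset Printing Implicit Defensive.
Import GRing.Theory.
Local Open Scope ring_scope.

(* A mould concentrated in depth r is represented by its depth-r component
   A^r, a polynomial in Q[u_1,...,u_r] = {mpoly rat[r]} (variable u_{k+1}
   is 'X_k, k : 'I_r).  Mould identities are stated pointwise, evaluating
   at all points of Q^r (equivalent to polynomial identities since Q is
   infinite). *)

Section Moulds.
Variable r : nat.
Implicit Types (A : {mpoly rat[r]}) (v : 'I_r -> rat).

Definition ext v (k : nat) : rat :=
  if insub k is Some i then v i else 0.

Definition vec (f : nat -> rat) : 'I_r -> rat := fun j => f (nat_of_ord j).

(* swap: (v_1,...,v_r) |-> (v_r, v_{r-1}-v_r, ..., v_1-v_2), 0-based *)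
Definition swap_vec v : 'I_r -> rat :=
  vec (fun j => if j == 0%N then ext v (r - 1) else ext v (r - 1 - j) - ext v (r - j)).

Definition swapA A v : rat := A.@[swap_vec v].

(* (u_1,...,u_r) |-> (u_0,u_1,...,u_{r-1}), u_0 = -(u_1+...+u_r) *)
Definition push_vec v : 'I_r -> rat :=
  vec (fun j => if j == 0%N then - \sum_(k < r) v k else ext v (j - 1)).

Definition push_invariant A : Prop := forall v, A.@[push_vec v] = A.@[v].

Definition rot_vec (i : nat) v : 'I_r -> rat := vec (fun j => ext v ((j + i) %% r)).

Definition rev_vec v : 'I_r -> rat := vec (fun j => ext v (r - 1 - j)).

(* swap(A) circ-neutral (only depth r is nonzero) *)
Definition swap_circ_neutral A : Prop :=
  (1 < r)%N -> forall v, \sum_(i < r) swapA A (rot_vec i v) = 0.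

(* s : 'S_r encodes the word (u_{s 0}, ..., u_{s (r-1)}); it is a shuffle of
   (u_1..u_i) with (u_{i+1}..u_r) iff the positions s^-1 of the letters of
   each block are increasing. *)
Definition is_shuffle (i : nat) (s : 'S_r) : bool :=
  [forall a : 'I_r, forall b : 'I_r,
     ((a < b)%N && ((b < i)%N || (i <= a)%N)) ==> ((s^-1)%g a < (s^-1)%g b)%N].

Definition alternal A : Prop :=
  (2 <= r)%N -> forall i : nat, (1 <= i)%N -> (i <= r./2)%N ->
    forall u : 'I_r -> rat,
      \sum_(s : 'S_r | is_shuffle i s) A.@[fun k => u (s k)] = 0.

End Moulds.

From mathcomp Require Import all_boot all_order all_algebra all_fingroup.
From mathcomp Require Import mpoly.
From mathcomp Require Import zify.
Set Implicit Arguments. Unset Strict Implicit. Unset Printing Implicit Defensive.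
Import GRing.Theory Num.Theory.
Local Open Scope ring_scope.

(* Alternality gives the antipode identity A(u_r, ..., u_1) = (-1)^(r-1) A(u_1, ..., u_r).
   Indeed, consider the alternating sum over i of the sums of A over the words
   (u_i, ..., u_1) ш (u_(i+1), ..., u_r): a word occurs in such a reverse shuffle for two
   consecutive values of i or for none, so the sum telescopes to 0, while for 0 < i < r the
   reverse shuffles are shuffles after relabelling the variables, so their sums vanish.
   On the other hand swap(rev v) = push(-rev(swap v)); since A is push-invariant and odd
   (homogeneous of odd degree), the antipode identity yields B(rev v) = -(-1)^(r-1) B(v) for
   B = swap(A). With the hypothesis B(v) = (-1)^(r-1) B(rev v) this forces B = 0, and as
   swap is onto, A vanishes on Q^r, hence A = 0. *)

Section VanishingPolynomials.
Variable R : numDomainType.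

Lemma poly_eq0_of_horner (q : {poly R}) : (forall t, q.[t] = 0) -> q = 0.
Proof.
move=> q0; apply: (@roots_geq_poly_eq0 _ q [seq i%:R | i <- iota 0 (size q)]).
- by apply/allP => x _; apply/rootP.
- by rewrite map_inj_uniq ?iota_uniq // => a b /eqP; rewrite eqr_nat => /eqP.
- by rewrite size_map size_iota.
Qed.

Variable n : nat.
Implicit Types (p : {mpoly R[n.+1]}) (m : 'X_{1..n.+1}).
Local Notation widen := (widen_ord (leqnSn n)).

Lemma meval_muni p (v : 'I_n.+1 -> R) :
  p.@[v] = (map_poly (meval (v \o widen)) (muni p)).[v ord_max].
Proof.
rewrite muniE mevalE raddf_sum /= horner_sum; apply: eq_bigr => m _.
rewrite -!mul_polyC rmorphM /= !map_polyC /= map_polyXn !hornerE /= mevalZ mevalX.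
by rewrite big_ord_recr /= mulrA; congr (_ * _ * _); apply: eq_bigr => i _; rewrite mnmE.
Qed.

Lemma mcoeff_muni p m :
  ((muni p)`_(m ord_max))@_[multinom m (widen i) | i < n] = p@_m.
Proof.
have split_mnm m' : ([multinom m' (widen i) | i < n] == [multinom m (widen i) | i < n])
    && (m' ord_max == m ord_max) = (m' == m).
  apply/andP/eqP => [[/eqP/mnmP E /eqP Emax]|-> //].
  apply/mnmP => i; case: (unliftP ord_max i) => [j ->|-> //].
  have -> : lift ord_max j = widen j by apply: val_inj; rewrite /= /bump leqNgt ltn_ord.
  by have := E j; rewrite !mnmE.
rewrite muniE coef_sum raddf_sum [in RHS](mpolyE p) raddf_sum /=; apply: eq_bigr => m' _.
rewrite -[_ *: 'X^_]mul_polyC coefCM coefXn mulr_natr mcoeffMn !mcoeffZ !mcoeffX.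
rewrite -split_mnm [m ord_max == _]eq_sym.
by case: eqP => _; case: eqP => _; rewrite ?mulr0n ?mulr1n ?mulr0.
Qed.
End VanishingPolynomials.

Lemma mpoly_eq0_of_meval (R : numDomainType) n (p : {mpoly R[n]}) :
  (forall v, p.@[v] = 0) -> p = 0.
Proof.
elim: n p => [|n IH] p p0.
  have := p0 (fun _ => 0); rewrite {1}(nvar0_mpolyC p) mevalC => p00.
  by rewrite (nvar0_mpolyC p) p00 mpolyC0.
have coef_muni0 k : (muni p)`_k = 0.
  apply: IH => w; rewrite -coef_map.
  suff -> : map_poly (meval w) (muni p) = 0 by rewrite coef0.
  apply: poly_eq0_of_horner => t.
  pose v (i : 'I_n.+1) := if unlift ord_max i is Some j then w j else t.
  rewrite -(p0 v) meval_muni /v unlift_none; congr _.[_].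
  apply: eq_map_poly => q; apply: meval_eq => i /=.
  have -> : widen_ord (leqnSn n) i = lift ord_max i.
    by apply: val_inj; rewrite /= /bump leqNgt ltn_ord.
  by rewrite liftK.
by apply/mpolyP => m; rewrite -mcoeff_muni coef_muni0 !mcoeff0.
Qed.

Section WordOrders.
Variable n : nat.
Implicit Types (P Q : rel 'I_n) (s t : 'S_n).

(* [(s^-1) a] is the position of the letter [a] in the word of [s]. *)
Definition respects P s :=
  [forall a, forall b, P a b ==> ((s^-1)%g a < (s^-1)%g b)%N].

Definition shuffle_rel (i : nat) : rel 'I_n :=
  fun a b => (a < b)%N && ((b < i)%N || (i <= a)%N).

(* The words respecting [rev_shuffle_rel i] are the shuffles of (u_i, ..., u_1) with
   (u_(i+1), ..., u_n). *)
Definition rev_shuffle_rel (i : nat) : rel 'I_n :=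
  fun a b => ((b < a)%N && (a < i)%N) || ((a < b)%N && (i <= a)%N).

Lemma respectsP P s :
  reflect (forall a b, P a b -> ((s^-1)%g a < (s^-1)%g b)%N) (respects P s).
Proof.
apply: (iffP forallP) => [H a b|H a]; first by have /implyP := forallP (H a) b.
by apply/forallP => b; apply/implyP/H.
Qed.

Lemma eq_respects P Q s : P =2 Q -> respects P s = respects Q s.
Proof. by move=> PQ; apply: eq_forallb => a; apply: eq_forallb => b; rewrite PQ. Qed.

Lemma respects_relabel P s t :
  respects P (s * t) = respects (fun a b => P (t a) (t b)) s.
Proof.
have posE a : ((s * t)^-1)%g (t a) = (s^-1)%g a by rewrite invMg permM permK.
apply/respectsP/respectsP => H a b Pab; first by rewrite -!posE; apply: H.
by rewrite -(permKV t a) -(permKV t b) !posE; apply: H; rewrite !permKV.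
Qed.

Lemma sum_respects_relabel (V : nmodType) P i t (F : 'S_n -> V) :
  (forall a b, P (t a) (t b) = shuffle_rel i a b) ->
  \sum_(s | respects P s) F s = \sum_(s | is_shuffle i s) F (s * t)%g.
Proof.
move=> tE; rewrite (reindex_inj (mulIg t)) /=; apply: eq_bigl => s.
by rewrite respects_relabel; apply: eq_respects.
Qed.

Lemma leq_incr_ord (q : 'I_n -> 'I_n) :
  (forall a b : 'I_n, (a < b)%N -> (q a < q b)%N) -> forall a : 'I_n, (a <= q a)%N.
Proof.
move=> incr; suff ge k (a : 'I_n) : (a : nat) = k -> (k <= q a)%N by move=> a; apply: ge.
elim: k a => // k IH a ak.
have k_lt : (k < n)%N by have := ltn_ord a; lia.
have := IH (Ordinal k_lt) erefl; have := incr (Ordinal k_lt) a; rewrite ak /=.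
by move=> /(_ (ltnSn k)); lia.
Qed.

Lemma incr_ord_id (q : 'I_n -> 'I_n) :
  (forall a b : 'I_n, (a < b)%N -> (q a < q b)%N) -> q =1 id.
Proof.
move=> incr a; apply: val_inj => /=; apply/eqP.
rewrite eqn_leq (leq_incr_ord incr) andbT.
have rev_incr (b c : 'I_n) :
    (b < c)%N -> (rev_ord (q (rev_ord b)) < rev_ord (q (rev_ord c)))%N.
  have := incr (rev_ord c) (rev_ord b); have := ltn_ord (q (rev_ord b)).
  by have := ltn_ord (q (rev_ord c)); have := ltn_ord b; have := ltn_ord c; rewrite /=; lia.
have := leq_incr_ord rev_incr (rev_ord a); rewrite rev_ordK /=.
by have := ltn_ord a; have := ltn_ord (q a); lia.
Qed.

Lemma respects_ltn s : respects (fun a b => (a < b)%N) s = (s == 1%g).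
Proof.
apply/respectsP/eqP => [/incr_ord_id sV_id|-> a b]; last by rewrite invg1 !perm1.
by apply/permP => a; rewrite perm1; have /= := sV_id (s a); rewrite permK.
Qed.

Definition rev_perm : 'S_n := perm (@rev_ord_inj n).

Lemma rev_permV : (rev_perm^-1)%g = rev_perm.
Proof.
by apply/permP => a; apply: (@perm_inj _ rev_perm); rewrite permKV !permE rev_ordK.
Qed.

Lemma respects_gtn s : respects (fun a b => (b < a)%N) s = (s == rev_perm).
Proof.
rewrite eq_mulgV1 rev_permV -respects_ltn respects_relabel.
by apply: eq_respects => a b; rewrite !permE /=; have := ltn_ord a; have := ltn_ord b; lia.
Qed.

End WordOrders.

Lemma ord_perm_of_nat n (f : nat -> nat) :
  (forall a, (a < n)%N -> (f a < n)%N) -> {in gtn n &, injective f} ->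
  exists t : 'S_n, forall a, t a = f a :> nat.
Proof.
move=> f_lt f_inj.
have g_inj : injective (fun a : 'I_n => Ordinal (f_lt a (ltn_ord a))).
  by move=> a b [/f_inj ab]; apply: val_inj; apply: ab; rewrite inE.
by exists (perm g_inj) => a; rewrite permE.
Qed.

Lemma rev_shuffle_relabel_shuffle n i : (i <= n)%N ->
  exists t : 'S_n, forall a b, rev_shuffle_rel i (t a) (t b) = shuffle_rel i a b.
Proof.
move=> i_le; pose f a := if (a < i)%N then (i.-1 - a)%N else a.
have [t tE] : exists t : 'S_n, forall a, t a = f a :> nat.
  apply: ord_perm_of_nat => [a|a b]; rewrite ?inE /f; first by case: ifP; lia.
  by case: ifP; case: ifP; lia.
by exists t => a b; rewrite /rev_shuffle_rel /shuffle_rel !tE /f; case: ifP; case: ifP; lia.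
Qed.

Lemma rev_shuffle_relabel_swap n i : (i <= n)%N ->
  exists t : 'S_n, forall a b, rev_shuffle_rel i (t a) (t b) = shuffle_rel (n - i) a b.
Proof.
move=> i_le; pose f a := if (a < n - i)%N then (a + i)%N else (n.-1 - a)%N.
have [t tE] : exists t : 'S_n, forall a, t a = f a :> nat.
  apply: ord_perm_of_nat => [a|a b]; rewrite ?inE /f; first by case: ifP; lia.
  by case: ifP; case: ifP; lia.
exists t => a b; rewrite /rev_shuffle_rel /shuffle_rel !tE /f.
by have := ltn_ord a; have := ltn_ord b; case: ifP; case: ifP; lia.
Qed.

Section Telescoping.
Variable n : nat.
Implicit Types (P : rel 'I_n.+1) (s : 'S_n.+1).

Lemma respects_first P s : irreflexive P ->
  respects P s = respects (fun a b => (a != s ord0) && P a b) s.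
Proof.
move=> Pirr; apply/respectsP/respectsP => H a b; first by case/andP=> _; apply: H.
have [-> Pab|a_ne Pab] := eqVneq a (s ord0); last by apply: H; rewrite a_ne.
have b_ne : b != s ord0 by apply: contraTneq Pab => ->; rewrite Pirr.
rewrite permK lt0n; apply: contra b_ne => /eqP sVb0.
by rewrite -(permKV s b) (inj_eq perm_inj) -val_eqE /= sVb0.
Qed.

Lemma rev_shuffle_rel_irr i : irreflexive (@rev_shuffle_rel n.+1 i).
Proof. by move=> a; rewrite /rev_shuffle_rel ltnn. Qed.

Lemma rev_shuffle_first i s : (i <= n.+1)%N -> respects (rev_shuffle_rel i) s ->
  i = s ord0 \/ i = (s ord0).+1.
Proof.
move=> i_le /respectsP rs; set m := s ord0.
have not_before_first a : ~~ rev_shuffle_rel i a m.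
  by apply/negP => /rs; rewrite /m permK ltn0.
have [im|mi|->] := ltngtP i m; last by left.
  have i_lt : (i < n.+1)%N by apply: ltn_trans im (ltn_ord m).
  by have := not_before_first (Ordinal i_lt); rewrite /rev_shuffle_rel /=; lia.
have [|im1|->] := ltngtP i m.+1; [lia| |by right].
have m1_lt : (m.+1 < n.+1)%N by lia.
by have := not_before_first (Ordinal m1_lt); rewrite /rev_shuffle_rel /=; lia.
Qed.

Lemma respects_rev_shuffle_first s :
  respects (rev_shuffle_rel (s ord0)) s = respects (rev_shuffle_rel (s ord0).+1) s.
Proof.
have irr i := rev_shuffle_rel_irr i.
rewrite [LHS](respects_first _ (irr _)) [RHS](respects_first _ (irr _)).
apply: eq_respects => a b; rewrite -val_eqE /rev_shuffle_rel /=; lia.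
Qed.

Lemma sum_sign_rev_shuffle (R : pzRingType) s :
  \sum_(i < n.+2) (-1) ^+ i * (respects (rev_shuffle_rel i) s)%:R = 0 :> R.
Proof.
set m := s ord0.
have m_lt : (m < n.+2)%N by apply: ltn_trans (ltn_ord m) _.
have m1_lt : (m.+1 < n.+2)%N by rewrite ltnS ltn_ord.
rewrite (bigD1 (Ordinal m_lt)) // (bigD1 (Ordinal m1_lt)) /=; last first.
  by rewrite -val_eqE /=; lia.
rewrite big1 ?addr0 => [|i /andP[i_ne_m i_ne_m1]]; last first.
  case rsi: respects; last by rewrite mulr0.
  have [i_eq|i_eq] := rev_shuffle_first (ltnSE (ltn_ord i)) rsi.
    by move: i_ne_m; rewrite -val_eqE /= i_eq eqxx.
  by move: i_ne_m1; rewrite -val_eqE /= i_eq eqxx.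
by rewrite -respects_rev_shuffle_first exprS mulN1r mulNr addrN.
Qed.

Lemma alternating_rev_shuffle_sum (R : pzRingType) (F : 'S_n.+1 -> R) :
  \sum_(i < n.+2) (-1) ^+ i * \sum_(s | respects (rev_shuffle_rel i) s) F s = 0.
Proof.
under eq_bigr do rewrite big_mkcond mulr_sumr.
rewrite exchange_big /=; apply: big1 => s _.
rewrite (eq_bigr (fun i : 'I_n.+2 => (-1) ^+ i * (respects (rev_shuffle_rel i) s)%:R * F s)).
  by rewrite -mulr_suml sum_sign_rev_shuffle mul0r.
by move=> i _; case: respects; rewrite ?mulr1 ?mulr0 ?mul0r.
Qed.

End Telescoping.

Lemma alternal_rev_shuffle_sum n (A : {mpoly rat[n]}) i (u : 'I_n -> rat) :
  alternal A -> (0 < i < n)%N ->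
  \sum_(s | respects (rev_shuffle_rel i) s) A.@[fun k => u (s k)] = 0.
Proof.
move=> altA /andP[i_gt0 i_lt]; have n_ge2 : (2 <= n)%N by lia.
have relabel_sum0 j (t : 'S_n) : (1 <= j <= n./2)%N ->
    (forall a b, rev_shuffle_rel i (t a) (t b) = shuffle_rel j a b) ->
    \sum_(s | respects (rev_shuffle_rel i) s) A.@[fun k => u (s k)] = 0.
  move=> /andP[j_gt0 j_le] tE; rewrite (sum_respects_relabel _ tE).
  rewrite -[RHS](altA n_ge2 j j_gt0 j_le (fun k => u (t k))).
  by apply: eq_bigr => s _; apply: meval_eq => k; rewrite permM.
have [i_le|i_gt] := leqP i n./2.
  have [t tE] := rev_shuffle_relabel_shuffle (ltnW i_lt).
  by apply: (relabel_sum0 i t) => //; rewrite i_gt0.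
have [t tE] := rev_shuffle_relabel_swap (ltnW i_lt).
by apply: (relabel_sum0 (n - i)%N t) => //; move: i_gt; rewrite -!divn2; lia.
Qed.

Section VectorOperations.
Variable r : nat.
Implicit Types (v : 'I_r -> rat).

Lemma ext_ord v (i : 'I_r) : ext v i = v i.
Proof. by rewrite /ext valK. Qed.

Lemma ext_default v k : (r <= k)%N -> ext v k = 0.
Proof. by move=> r_le; rewrite /ext insubF // ltnNge r_le. Qed.

Lemma ext_vec (g : nat -> rat) k : ext (vec (r:=r) g) k = if (k < r)%N then g k else 0.
Proof. by rewrite /ext; case: insubP => [i -> <- //|/negbTE ->]. Qed.

End VectorOperations.

Lemma alternal_antipode n (A : {mpoly rat[n.+1]}) (u : 'I_n.+1 -> rat) :
  alternal A -> A.@[rev_vec u] = (-1) ^+ n * A.@[u].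
Proof.
move=> altA; have := alternating_rev_shuffle_sum (fun s : 'S_n.+1 => A.@[fun k => u (s k)]).
rewrite big_ord_recl big_ord_recr [\sum_(i < n) _]big1 => [|i _]; last first.
  by rewrite alternal_rev_shuffle_sum ?mulr0 //= /bump /=; have := ltn_ord i; lia.
have first_rel : rev_shuffle_rel 0 =2 (fun a b : 'I_n.+1 => (a < b)%N).
  by move=> a b; rewrite /rev_shuffle_rel; lia.
have last_rel : rev_shuffle_rel n.+1 =2 (fun a b : 'I_n.+1 => (b < a)%N).
  by move=> a b; rewrite /rev_shuffle_rel; have := ltn_ord a; lia.
rewrite /= [bump 0 n]/bump add1n.
rewrite (eq_bigl _ _ (fun s => eq_respects s first_rel)) (eq_bigl _ _ (@respects_ltn _)).
rewrite (eq_bigl _ _ (fun s => eq_respects s last_rel)) (eq_bigl _ _ (@respects_gtn _)).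
rewrite !big_pred1_eq add0r expr0 mul1r exprS mulN1r mulNr => /eqP.
rewrite addr_eq0 => /eqP AuE.
have -> : A.@[rev_vec u] = A.@[fun k => u (rev_perm n.+1 k)].
  by apply: meval_eq => k; rewrite /rev_vec /vec permE -ext_ord /=; congr ext; lia.
have -> : A.@[u] = A.@[fun k => u ((1 : 'S_n.+1)%g k)] by apply: meval_eq => k; rewrite perm1.
by rewrite AuE opprK signrMK.
Qed.

Section SwapVectors.
Variable r : nat.

Lemma ext_swap_vec (v : 'I_r.+1 -> rat) k : (k < r.+1)%N ->
  ext (swap_vec v) k = ext v (r - k) - ext v (r.+1 - k).
Proof.
move=> k_lt; rewrite ext_vec k_lt; case: eqP => [->|_]; last by congr (ext v _ - _); lia.
by rewrite subn0 [ext v r.+1]ext_default // subr0; congr ext; lia.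
Qed.

Lemma ext_rev_vec (v : 'I_r.+1 -> rat) k : (k < r.+1)%N -> ext (rev_vec v) k = ext v (r - k).
Proof. by move=> k_lt; rewrite ext_vec k_lt; congr ext; lia. Qed.

Lemma swap_vec_rev (v : 'I_r.+1 -> rat) :
  swap_vec (rev_vec v) =1 push_vec (fun j => - rev_vec (swap_vec v) j).
Proof.
have g_ext k : (k < r.+1)%N ->
    ext (fun j : 'I_r.+1 => - rev_vec (swap_vec v) j) k = ext v k.+1 - ext v k.
  move=> k_lt; change (ext (vec (r:=r.+1) (fun k => - ext (swap_vec v) (r.+1 - 1 - k))) k
    = ext v k.+1 - ext v k).
  rewrite ext_vec k_lt.
  by rewrite ext_swap_vec ?opprB; [congr (ext v _ - ext v _)|]; lia.
move=> j; rewrite -ext_ord ext_swap_vec // /push_vec /vec ext_rev_vec; last by lia.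
have [j0|j_gt0] := posnP j.
  rewrite j0 !subn0 subnn [ext (rev_vec v) _]ext_default // subr0.
  rewrite (eq_bigr (fun k : 'I_r.+1 => ext v k.+1 - ext v k)) => [|k _]; last first.
    by rewrite -g_ext // ext_ord.
  rewrite -(big_mkord xpredT (fun k => ext v k.+1 - ext v k)) telescope_sumr //.
  by rewrite [ext v r.+1]ext_default // sub0r opprK.
have j_lt := ltn_ord j; rewrite g_ext ?ext_rev_vec; try lia.
by congr (ext v _ - ext v _); lia.
Qed.

Lemma swap_vec_surj (u : 'I_r.+1 -> rat) : exists v, swap_vec v =1 u.
Proof.
pose S k := \sum_(m < k) ext u m.
exists (vec (fun k => S (r.+1 - k)%N)) => j.
have vE k : (k <= r.+1)%N -> ext (vec (r:=r.+1) (fun k => S (r.+1 - k)%N)) (r.+1 - k) = S k.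
  move=> k_le; rewrite ext_vec; case: ifP => [_|/negbT]; first by congr S; lia.
  rewrite -leqNgt => k_ge; have -> : k = 0%N by lia.
  by rewrite /S big_ord0.
rewrite -ext_ord ext_swap_vec //.
have j_lt := ltn_ord j; have -> : (r - j = r.+1 - j.+1)%N by lia.
rewrite !vE; try lia.
by rewrite /S big_ord_recr /= addrAC subrr add0r ext_ord.
Qed.

End SwapVectors.

Lemma meval_dhomog (R : comNzRingType) n d (p : {mpoly R[n]}) c v :
  p \is d.-homog -> p.@[fun i => c * v i] = c ^+ d * p.@[v].
Proof.
move=> /dhomogP homp; rewrite !mevalE mulr_sumr; apply: eq_big_seq => m m_supp.
have -> : d = (\sum_i m i)%N by rewrite -(homp m m_supp); apply: mdegE.
under eq_bigr do rewrite exprMn.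
by rewrite big_split /= prodrXr mulrCA.
Qed.

Lemma meval_dhomog_odd (R : comNzRingType) n d (p : {mpoly R[n]}) v :
  p \is d.-homog -> odd d -> p.@[fun i => - v i] = - p.@[v].
Proof.
move=> homp odd_d; rewrite (meval_eq (v2 := fun i => -1 * v i)) => [|i]; last first.
  by rewrite mulN1r.
by rewrite (meval_dhomog (-1) v homp) -signr_odd odd_d mulN1r.
Qed.

Theorem lemma15 (r n : nat) (A : {mpoly rat[r]}) :
  (1 <= r)%N -> (r <= n)%N ->
  A \is (n - r)%N.-homog ->
  alternal A ->
  push_invariant A ->
  swap_circ_neutral A ->
  (forall v : 'I_r -> rat,
     swapA A v = (-1) ^+ (r - 1) * swapA A (rev_vec v)) ->
  odd (n - r) ->
  A = 0.
Proof.
case: r A => [//|r] A _ _ homA altA pushA _ swapA_sym odd_deg.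
have swapA_rev v : swapA A (rev_vec v) = - ((-1) ^+ r * swapA A v).
  rewrite /swapA (meval_eq _ (swap_vec_rev v)) pushA.
  by rewrite (meval_dhomog_odd _ homA odd_deg) alternal_antipode.
have swapA0 v : swapA A v = 0.
  apply/eqP; rewrite -eqNr [X in _ == X]swapA_sym subSS subn0.
  by rewrite swapA_rev mulrN signrMK.
apply: mpoly_eq0_of_meval => u; have [v swap_vE] := swap_vec_surj u.
by rewrite -(swapA0 v); apply: meval_eq => j; rewrite swap_vE.
Qed.
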